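(* In every identically ordered instance in which $n$ agents with equal responsibilities have additive disvaluations over chores $e_1,\ldots,e_m$ (with $c_i(e_j)\ge c_i(e_k)$ for all agents $i$ and all $j<k$), the allocation produced by AlgChores gives every agent $i$ a bundle of disvalue at most $\frac{4n-1}{3n}APS_i$.
   Context: $APS_i=\max_p\min\{c_i(S):\sum_{e\in S}p_e\ge1/n\}$ over nonnegative price vectors summing to $1$. AlgChores (on identically ordered instances): start with empty bundles $B_1,\ldots,B_n$; for $r=1,\ldots,m$, add chore $e_r$ to the bundle of an agent who envies no other agent (agent $i$ envies $j$ if $c_i(B_i)>c_i(B_j)$), and then, while the envy graph contains a cycle, rotate the bundles along the cycle so that each agent on it receives the bundle she envied. *)

From HB Require Import structures.
From mathcomp Require Import all_boot all_order all_algebra.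
From mathcomp Require Import classical_sets boolp reals.
Set Implicit Arguments. Unset Strict Implicit. Unset Printing Implicit Defensive.
Import Order.TTheory GRing.Theory Num.Theory.
Local Open Scope ring_scope.
Local Open Scope classical_set_scope.

Section Chores.
Variables (R : realType) (n m : nat).
(* c i e = disvaluation of chore e (the chore e_{e+1}) for agent i. *)
Variable c : 'I_n -> 'I_m -> R.

Definition cost (i : 'I_n) (S : {set 'I_m}) : R := \sum_(e in S) c i e.

Definition price_vector (p : 'I_m -> R) : Prop :=
  (forall e, 0 <= p e) /\ \sum_(e < m) p e = 1.

(* min { c_i(S) : sum_{e in S} p_e >= 1/n }; the full set is always feasible
   for a price vector, so its cost is a valid initial value of the min. *)
Definition aps_val (i : 'I_n) (p : 'I_m -> R) : R :=
  \big[Order.min/cost i [set: 'I_m]%SET]_(S : {set 'I_m} | n%:R^-1 <= \sum_(e in S) p e)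
     cost i S.

(* APS_i = max over price vectors of aps_val (written as sup; the max is attained) *)
Definition APS (i : 'I_n) : R :=
  sup [set v | exists p, price_vector p /\ v = aps_val i p].

Definition bundles := 'I_n -> {set 'I_m}.

Definition empty_bundles : bundles := fun _ => finset.set0.

Definition envies (B : bundles) : rel 'I_n :=
  fun i j => cost i (B j) < cost i (B i).

Definition envies_no_one (B : bundles) (i : 'I_n) : Prop :=
  forall j, ~~ envies B i j.

Definition envy_acyclic (B : bundles) : Prop :=
  forall s : seq 'I_n, s != [::] -> ~~ cycle (envies B) s.

Definition rotate_step (B B' : bundles) : Prop :=
  exists s : seq 'I_n, [/\ s != [::], uniq s, cycle (envies B) s &
     B' = fun a => if a \in s then B (next s a) else B a].

(* "while the envy graph contains a cycle, rotate": any finite sequence of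
   rotations ending in an acyclic envy graph *)
Inductive rotate_until_acyclic : bundles -> bundles -> Prop :=
| rua_done B : envy_acyclic B -> rotate_until_acyclic B B
| rua_step B B' B'' : rotate_step B B' -> rotate_until_acyclic B' B'' ->
    rotate_until_acyclic B B''.

Definition add_chore (B : bundles) (k : 'I_n) (e : 'I_m) : bundles :=
  fun a => if a == k then (e |: B a)%SET else B a.

(* algchores_run r B : B is a possible state of AlgChores after the
   first r rounds (all nondeterministic choices allowed). *)
Inductive algchores_run : nat -> bundles -> Prop :=
| run0 : algchores_run 0 empty_bundles
| runS r (Hr : (r < m)%N) B k B' :
    algchores_run r B -> envies_no_one B k ->
    rotate_until_acyclic (add_chore B k (Ordinal Hr)) B' ->
    algchores_run r.+1 B'.

End Chores.

From HB Require Import structures.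
From mathcomp Require Import all_boot all_order all_algebra.
From mathcomp Require Import classical_sets boolp reals.
From mathcomp Require Import lra.
Set Implicit Arguments.
Unset Strict Implicit.
Import Order.TTheory GRing.Theory Num.Theory.
Local Open Scope ring_scope.

(* Two invariants survive every round: after r rounds the bundles partition
   the first r chores, and each agent's own bundle costs her at most
   (4n-1)/(3n) APS_i.  Rotations only lower the disvalue of each agent for her
   own bundle.  When chore e_r goes to agent i, who envies nobody, write
   y = c_i(B_i) and x = c_i(e_r).  The n bundles together with e_r give
   n y + x <= c_i(M) <= n APS_i, the second bound from the prices
   proportional to c_i.  For y > 0 the prices that are 0 after e_r, 2 on
   chores of disvalue at least y and 1 on the others give every bundle price at
   least 2, so a share of at least 1/n is a set of price at least 3: it holds
   either a chore of disvalue >= y and a second chore up to e_r, or three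
   chores up to e_r, whence APS_i >= min (y + x) (3 x). *)

Lemma ler_sum_term {R : numDomainType} {T : finType} {P : pred T} {f : T -> R} e :
  (forall e, 0 <= f e) -> P e -> f e <= \sum_(e' | P e') f e'.
Proof. by move=> f_ge0 Pe; rewrite (bigD1 e) //= lerDl sumr_ge0. Qed.

Section APSBounds.
Variables (R : realType) (n m : nat) (c : 'I_n -> 'I_m -> R).
Hypothesis n_gt0 : (0 < n)%N.
Hypothesis c_ge0 : forall i e, 0 <= c i e.

Lemma aps_val_le_APS i p : price_vector p -> aps_val c i p <= APS c i.
Proof.
move=> p_price; apply: ub_le_sup; last by exists p.
by exists (cost c i [set: 'I_m]%SET) => _ [q [_ ->]]; apply/bigmin_leP; left.
Qed.

Lemma APS_ge_weights i (w : 'I_m -> R) (v : R) :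
  (forall e, 0 <= w e) -> 0 < \sum_e w e ->
  (forall S : {set 'I_m}, (\sum_e w e) / n%:R <= \sum_(e in S) w e ->
     v <= cost c i S) ->
  v <= APS c i.
Proof.
set W := \sum_e w e => w_ge0 W_gt0 v_le_cost.
pose p e := w e / W.
have p_price : price_vector p.
  split=> [e|]; first by rewrite divr_ge0 // ltW.
  by rewrite -mulr_suml mulfV // gt_eqF.
apply: le_trans (aps_val_le_APS i p_price); apply/bigmin_geP; split.
  apply: v_le_cost; rewrite (eq_bigl xpredT) => [|e]; last by rewrite finset.in_setT.
  rewrite ler_pdivrMr ?ltr0n //; apply: ler_peMr; [exact: ltW | by rewrite ler1n].
by move=> S; rewrite -mulr_suml ler_pdivlMr // mulrC; exact: v_le_cost.
Qed.

Lemma chore_le_APS i e : c i e <= APS c i.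
Proof.
pose w e' : R := (e' == e)%:R.
have W1 : \sum_e' w e' = 1.
  by rewrite (bigD1 e) //= /w eqxx big1 ?addr0 // => e' /negbTE ->.
apply: (@APS_ge_weights i w) => [e'||S]; rewrite ?W1 ?ler0n ?ltr01 // mul1r => HS.
apply: ler_sum_term => //; apply: contraLR HS => eNS.
rewrite -ltNge big1 ?invr_gt0 ?ltr0n // => e' e'S.
by rewrite /w; case: eqP e'S => // ->; rewrite (negbTE eNS).
Qed.

Lemma APS_ge0 i : 0 <= APS c i.
Proof.
have [m0|m_gt0] := posnP m; last first.
  exact: le_trans (c_ge0 i (Ordinal m_gt0)) (chore_le_APS i _).
rewrite /APS (_ : [set v | _]%classic = set0) ?sup0 //.
apply/seteqP; split => // v [p [[_ p_sum] _]].
have : \sum_(e < m) p e = 0 by apply: big1 => e; have := ltn_ord e; rewrite {2}m0.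
by rewrite p_sum => /eqP; rewrite oner_eq0.
Qed.

Lemma sum_cost_le_APS i : \sum_e c i e <= n%:R * APS c i.
Proof.
have [C_gt0|C_le0] := ltP 0 (\sum_e c i e); last first.
  by apply: le_trans C_le0 _; rewrite mulr_ge0 ?ler0n ?APS_ge0.
rewrite mulrC -ler_pdivrMr ?ltr0n //.
exact: (@APS_ge_weights i (c i) _ (c_ge0 i) C_gt0 (fun S h => h)).
Qed.
End APSBounds.

Section PrefixPartition.
Variables (n m : nat).

Definition partitions_prefix (B : bundles n m) (r : nat) : Prop :=
  forall e : 'I_m, (\sum_j (e \in B j))%N = (e < r)%N.

Lemma partitions_prefix0 : partitions_prefix (@empty_bundles n m) 0.
Proof. by move=> e; rewrite big1 // => j _; rewrite finset.in_set0. Qed.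

Lemma partitions_prefix_mem B r j e :
  partitions_prefix B r -> e \in B j -> (e < r)%N.
Proof. by move=> /(_ e) + eBj; rewrite (bigD1 j) //= eBj; case: (e < r)%N. Qed.

Lemma partitions_prefix_fresh B r (r_lt_m : (r < m)%N) j :
  partitions_prefix B r -> Ordinal r_lt_m \notin B j.
Proof.
by move=> B_part; apply/negP => /(partitions_prefix_mem B_part); rewrite ltnn.
Qed.

Lemma partitions_prefix_add_chore B r (r_lt_m : (r < m)%N) k :
  partitions_prefix B r -> partitions_prefix (add_chore B k (Ordinal r_lt_m)) r.+1.
Proof.
move=> B_part e.
have split_mem j : (e \in add_chore B k (Ordinal r_lt_m) j : nat) =
    ((e \in B j) + ((j == k) && (e == Ordinal r_lt_m)))%N.
  rewrite /add_chore; case: (eqVneq j k) => [->|_]; rewrite ?addn0 // finset.in_setU1.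
  by case: eqP => [->|_]; rewrite ?(negbTE (partitions_prefix_fresh r_lt_m k B_part)) ?addn0.
rewrite (eq_bigr _ (fun j _ => split_mem j)) big_split /= B_part.
rewrite (bigD1 k) //= eqxx big1 => [|j /negbTE->] //; rewrite addn0 -val_eqE /=.
by rewrite ltnS [in RHS]leq_eqVlt; case: ltngtP.
Qed.

Lemma sum_over_bundles (V : nmodType) (B : bundles n m) r (w : 'I_m -> V) :
  partitions_prefix B r ->
  \sum_j \sum_(e in B j) w e = \sum_(e : 'I_m | (e < r)%N) w e.
Proof.
move=> B_part.
rewrite (eq_bigr (fun j => \sum_e w e *+ (e \in B j))) => [|j _]; last first.
  by rewrite big_mkcond; apply: eq_bigr => e _; case: (e \in B j).
rewrite exchange_big [RHS]big_mkcond; apply: eq_bigr => e _.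
by rewrite sumrMnr B_part; case: (e < r)%N.
Qed.
End PrefixPartition.

Section Rotation.
Variables (R : realType) (n m : nat) (c : 'I_n -> 'I_m -> R).

Lemma rotate_step_partitions B B' r :
  rotate_step c B B' -> partitions_prefix B r -> partitions_prefix B' r.
Proof.
(* [next s] fixes the agents off [s], so [B'] is [B] composed with the
   permutation [next s]. *)
move=> [s [_ s_uniq _ ->]] B_part e; rewrite -B_part.
rewrite [RHS](reindex_inj (can_inj (prev_next s_uniq))) /=.
by apply: eq_bigr => j _; case: ifP => // j_s; rewrite next_nth j_s.
Qed.

Lemma rotate_step_cost_le B B' i :
  rotate_step c B B' -> cost c i (B' i) <= cost c i (B i).
Proof.
move=> [s [_ _ s_cycle ->]] /=; case: ifP => // i_s.
exact: ltW (next_cycle s_cycle i_s).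
Qed.

Lemma rotate_until_acyclic_partitions B B' r :
  rotate_until_acyclic c B B' -> partitions_prefix B r -> partitions_prefix B' r.
Proof. by elim=> // B0 B1 B2 step _ IH /(rotate_step_partitions step). Qed.

Lemma rotate_until_acyclic_cost_le B B' i :
  rotate_until_acyclic c B B' -> cost c i (B' i) <= cost c i (B i).
Proof.
by elim=> // B0 B1 B2 step _ IH; apply: le_trans IH (rotate_step_cost_le i step).
Qed.
End Rotation.

Section NewChore.
Variables (R : realType) (n m : nat) (c : 'I_n -> 'I_m -> R).
Hypothesis n_gt0 : (0 < n)%N.
Hypothesis c_ge0 : forall i e, 0 <= c i e.
Hypothesis c_sorted : forall i (j k : 'I_m), (j < k)%N -> c i k <= c i j.
Variables (B : bundles n m) (r : nat) (r_lt_m : (r < m)%N) (i : 'I_n).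
Hypothesis B_part : partitions_prefix B r.
Hypothesis i_envy_free : forall j, cost c i (B i) <= cost c i (B j).

Local Notation e_r := (Ordinal r_lt_m).
Local Notation x := (c i e_r).
Local Notation y := (cost c i (B i)).

Lemma new_chore_le_prefix (e : 'I_m) : (e <= r)%N -> x <= c i e.
Proof.
rewrite leq_eqVlt => /orP[/eqP e_eq | e_lt]; last exact: c_sorted.
by rewrite (_ : e = e_r) //; apply: val_inj.
Qed.

Lemma bundles_new_chore_le_sum_cost : n%:R * y + x <= \sum_e c i e.
Proof.
rewrite (bigID (fun e : 'I_m => (e < r)%N)) /= -(sum_over_bundles _ B_part).
apply: lerD; last by apply: ler_sum_term; rewrite ?ltnn.
rewrite mulr_natl -[n in _ *+ n]card_ord -sumr_const.
by apply: ler_sum => j _; apply: i_envy_free.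
Qed.

Definition threshold_weight (e : 'I_m) : nat :=
  if (e <= r)%N then (if y <= c i e then 2 else 1) else 0.

Lemma threshold_weight_bundle j :
  0 < y -> (2 <= \sum_(e in B j) threshold_weight e)%N.
Proof.
move=> y_gt0.
have w_ge1 e : e \in B j -> (1 <= threshold_weight e)%N.
  move=> /(partitions_prefix_mem B_part)/ltnW e_le.
  by rewrite /threshold_weight e_le; case: ifP.
have [two_le|] := leqP 2 #|B j|.
  by apply: leq_trans two_le _; rewrite -sum1_card; apply: leq_sum.
rewrite ltnS leq_eqVlt ltnS leqn0 => /orP[/cards1P[e Bj]|/eqP/cards0_eq Bj].
  have := i_envy_free j; rewrite Bj [cost _ _ [set e]%SET]/cost big_set1 => heavy.
  have e_le : (e <= r)%N.
    by apply/ltnW/(partitions_prefix_mem B_part (j:=j)); rewrite Bj set11.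
  by rewrite big_set1 /threshold_weight e_le heavy.
have := i_envy_free j; rewrite Bj => /(lt_le_trans y_gt0).
by rewrite /cost !big_set0 ltxx.
Qed.

Lemma threshold_weight_total : 0 < y -> (2 * n < \sum_e threshold_weight e)%N.
Proof.
move=> y_gt0; rewrite (bigID (fun e : 'I_m => (e < r)%N)) /= -(sum_over_bundles _ B_part).
rewrite -addn1 leq_add //.
  apply: (@leq_trans (\sum_(j < n) 2)); first by rewrite sum_nat_const card_ord mulnC.
  by apply: leq_sum => j _; apply: threshold_weight_bundle.
by rewrite (bigD1 e_r) ?ltnn //= {1}/threshold_weight leqnn; case: ifP; rewrite !addSn.
Qed.

Lemma min_le_cost_of_weight_gt2 (S : {set 'I_m}) :
  (2 < \sum_(e in S) threshold_weight e)%N ->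
  Num.min (y + x) (3 * x) <= cost c i S.
Proof.
move=> w_gt2; rewrite ge_min.
case: (pickP [pred e in S | (e <= r)%N && (y <= c i e)]) => [e /and3P[eS e_le heavy]|light].
  case: (pickP [pred e' in S | (e' != e) && (e' <= r)%N]) => [e' /and3P[e'S e'_ne e'_le]|far].
    apply/orP; left; rewrite [cost c i S]/cost (bigD1 e) //=; apply: lerD heavy _.
    apply: le_trans (new_chore_le_prefix e'_le) _.
    by apply: ler_sum_term; rewrite ?e'S.
  move: w_gt2; rewrite (bigD1 e) //= big1 => [|e' /andP[e'S e'_ne]].
    by rewrite /threshold_weight e_le heavy.
  by rewrite /threshold_weight; have := far e'; rewrite /= e'S e'_ne /= => ->.
have w_light e : e \in S -> threshold_weight e = (e <= r)%N.
  move=> eS; rewrite /threshold_weight; case: ifP => // e_le.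
  by have := light e; rewrite /= eS e_le /= => ->.
apply/orP; right; apply: le_trans (_ : x *+ \sum_(e in S) threshold_weight e <= _).
  by rewrite mulr_natl ler_wpMn2l.
rewrite -sumrMnr; apply: ler_sum => e eS; rewrite w_light //.
by case: (boolP (e <= r)%N) => e_le; rewrite ?mulr1n ?mulr0n ?new_chore_le_prefix.
Qed.

Lemma min_le_APS : Num.min (y + x) (3 * x) <= APS c i.
Proof.
(* For y = 0 a bundle may be empty and carry no price, but then y + x = x. *)
have [y_gt0|y_le0] := ltP 0 y; last first.
  rewrite ge_min; apply/orP; left.
  by apply: le_trans (chore_le_APS n_gt0 c_ge0 i e_r); rewrite gerDr.
pose w e : R := (threshold_weight e)%:R.
apply: (@APS_ge_weights _ _ _ _ n_gt0 i w) => [e||S]; rewrite -?natr_sum ?ltr0n.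
- exact: ler0n.
- exact: leq_ltn_trans (threshold_weight_total y_gt0).
move=> W_le; apply: min_le_cost_of_weight_gt2; rewrite -(ltr_nat R).
apply: lt_le_trans W_le; rewrite ltr_pdivlMr ?ltr0n // -natrM ltr_nat.
exact: threshold_weight_total.
Qed.

(* If 3 x <= APS_i then n (y + x) <= c_i(M) + (n - 1) x
   <= n APS_i + (n - 1) APS_i / 3. *)
Lemma new_bundle_cost_le : y + x <= ((4 * n - 1)%:R / (3 * n)%:R) * APS c i.
Proof.
have total_le := bundles_new_chore_le_sum_cost.
have total_ge := sum_cost_le_APS n_gt0 c_ge0 i.
have A_ge0 := APS_ge0 n_gt0 c_ge0 i; have x_ge0 := c_ge0 i e_r.
have n_ge1 : 1 <= n%:R :> R by rewrite ler1n.
rewrite natrB ?muln_gt0 // !natrM mulrAC ler_pdivlMr; last by rewrite mulr_gt0 ?ltr0n.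
have := min_le_APS; rewrite ge_min => /orP[] min_le.
  have : 0 <= (n%:R - 1) * APS c i by rewrite mulr_ge0 // subr_ge0.
  nra.
have : 0 <= (n%:R - 1) * (APS c i - 3 * x) by rewrite mulr_ge0 // subr_ge0.
nra.
Qed.
End NewChore.

Section Run.
Variables (R : realType) (n m : nat) (c : 'I_n -> 'I_m -> R).
Hypothesis n_gt0 : (0 < n)%N.
Hypothesis c_ge0 : forall i e, 0 <= c i e.
Hypothesis c_sorted : forall i (j k : 'I_m), (j < k)%N -> c i k <= c i j.

Lemma algchores_run_invariant r B : algchores_run c r B ->
  partitions_prefix B r /\
  forall i, cost c i (B i) <= ((4 * n - 1)%:R / (3 * n)%:R) * APS c i.
Proof.
elim=> [|r0 r_lt B0 k B1 _ [B0_part B0_le] k_free rot].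
  split=> [|i]; first exact: partitions_prefix0.
  by rewrite /cost big_set0 mulr_ge0 ?divr_ge0 ?ler0n ?APS_ge0.
have Badd_part := partitions_prefix_add_chore r_lt k B0_part.
split=> [|i]; first exact: rotate_until_acyclic_partitions rot Badd_part.
apply: le_trans (rotate_until_acyclic_cost_le i rot) _.
rewrite /add_chore; case: eqP => [->|_]; last exact: B0_le.
rewrite /cost big_setU1 ?(partitions_prefix_fresh r_lt k B0_part) //= addrC.
by apply: new_bundle_cost_le => // j; rewrite leNgt; apply: k_free.
Qed.
End Run.

Theorem lemma7 (R : realType) (n m : nat) (c : 'I_n -> 'I_m -> R)
  (Hn : (0 < n)%N)
  (Hnonneg : forall i e, 0 <= c i e)
  (Hord : forall i (j k : 'I_m), (j < k)%N -> c i k <= c i j)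
  (B : bundles n m) :
  algchores_run c m B ->
  forall i : 'I_n, cost c i (B i) <= ((4 * n - 1)%:R / (3 * n)%:R) * APS c i.
Proof. by move=> run; case: (algchores_run_invariant Hn Hnonneg Hord run). Qed.
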